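(* Let $n\ge 3$, let $a_0,\ldots,a_{n-1}$ be indeterminates over $\mathbb{Q}$ and $f=x^n+a_{n-1}x^{n-1}+\cdots+a_0$. For each integer $m$ put $\varphi_m(x)=f^{(m)}(x)/m!$ if $1\le m\le n$ and $\varphi_m=0$ if $m\le 0$ or $m>n$. Let $M$ be the infinite matrix with entries $M_{2s-1,l}=\varphi_{2(l-s)+2}$, $M_{2s,l}=\varphi_{2(l-s)+1}$ ($s,l\ge 1$), and let $H$ be its $(n-2)$th leading principal minor. Then $\deg(H,x)=(n-1)(n-2)/2$.
   Context: $f^{(m)}$ is the $m$th derivative of $f$ with respect to $x$; $\deg(H,x)$ is the degree of $H$ as a polynomial in $x$ with coefficients in $\mathbb{Q}[a_0,\ldots,a_{n-1}]$. *)

From HB Require Import structures.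
From mathcomp Require Import all_boot all_order all_algebra.
From mathcomp Require Import mpoly.
Set Implicit Arguments. Unset Strict Implicit. Unset Printing Implicit Defensive.
Import Order.TTheory GRing.Theory Num.Theory.
Local Open Scope ring_scope.

(* Coefficient ring Q[a_0,...,a_{n-1}]: a_i is the variable 'X_i. *)
Definition coefR (n : nat) := {mpoly rat[n]}.

Definition fpoly (n : nat) : {poly {mpoly rat[n]}} :=
  'X^n + \sum_(i < n) ('X_i : {mpoly rat[n]})%:P * 'X^i.

(* phi_m = f^(m)/m! for 1 <= m <= n, and 0 otherwise.
   p^`N(m) is the formal m-th derivative divided by m!. *)
Definition phi (n : nat) (m : int) : {poly {mpoly rat[n]}} :=
  match m with
  | Posz k => if (1 <= k <= n)%N then (fpoly n)^`N(k) else 0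
  | Negz _ => 0
  end.

(* Entry M_{i,l} of the infinite matrix (1-based indices i, l >= 1):
   M_{2s-1,l} = phi_{2(l-s)+2},  M_{2s,l} = phi_{2(l-s)+1}. *)
Definition Mentry (n : nat) (i l : nat) : {poly {mpoly rat[n]}} :=
  if odd i then
    let s := (i.+1)./2 in phi n (2 * (Posz l - Posz s) + 2)%R
  else
    let s := i./2 in phi n (2 * (Posz l - Posz s) + 1)%R.

Definition Hminor (n : nat) : {poly {mpoly rat[n]}} :=
  \det (\matrix_(i < n - 2, j < n - 2) Mentry n i.+1 j.+1).

From mathcomp Require Import all_boot all_algebra all_field.
From mathcomp Require Import mpoly.
From mathcomp Require Import zify ring.
Import GRing.Theory Num.Theory.
Local Open Scope ring_scope.

(* phi_m has degree n - m in x with leading coefficient C(n, m).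
   After multiplying column l of the minor by x^(2l) (0-based indices), every
   entry of row s has degree at most n - 2 + s, and its coefficient in that
   degree is C(n, 2l - s + 2).  So H x^(sum 2l) has degree at most
   sum (n - 2 + s), with coefficient there the determinant of the binomial
   matrix (C(n, 2l - s + 2)).  Up to a row permutation this is the Sylvester
   matrix of E(y) = sum_r C(n, 2r + 2) y^r and O(y) = sum_r C(n, 2r + 1) y^r.
   They are coprime: t^2 E(t^2) + t O(t^2) = (1 + t)^n - 1, so a common root
   t^2 would give |1 + t| = |1 - t| = 1, hence t = 0, while O(0) = n.  Thus
   the resultant is nonzero and deg H = sum (n - 2 + s) - sum 2l. *)

Section TopCoefficient.
Context {R : comNzRingType}.
Implicit Types (p q : {poly R}) (c d : R).

Definition topcoef (K : nat) p c := forall k, (K <= k)%N -> p`_k = (k == K)%:R * c.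

Lemma topcoef0 K : topcoef K 0 0.
Proof. by move=> k _; rewrite coef0 mulr0. Qed.

Lemma topcoefC c : topcoef 0 c%:P c.
Proof. by move=> k _; rewrite coefC; case: (k == 0)%N; rewrite ?mul1r ?mul0r. Qed.

Lemma topcoefXn e : topcoef e 'X^e 1.
Proof. by move=> k _; rewrite coefXn mulr1. Qed.

Lemma topcoefD K p q c d : topcoef K p c -> topcoef K q d -> topcoef K (p + q) (c + d).
Proof. by move=> hp hq k hk; rewrite coefD hp // hq // mulrDr. Qed.

Lemma topcoefM a b p q c d :
  topcoef a p c -> topcoef b q d -> topcoef (a + b) (p * q) (c * d).
Proof.
move=> hp hq k hk; have ak : (a < k.+1)%N by lia.
rewrite coefM (bigD1 (Ordinal ak)) //= big1 ?addr0 => [|j /= neq_ja].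
  rewrite hp // hq; last by lia.
  have -> : (k - a == b)%N = (k == a + b)%N by apply/eqP/eqP; lia.
  by rewrite eqxx mul1r; case: (k == a + b)%N; rewrite ?mul1r ?mul0r ?mulr0.
have [lt_ja|lt_aj] : (j < a)%N \/ (a < j)%N by have : (j : nat) != a by []; lia.
- rewrite (hq (k - j)%N); last by lia.
  have /negbTE -> : (k - j != b)%N by apply/eqP; lia.
  by rewrite mul0r mulr0.
- by rewrite hp ?(ltnW lt_aj) // gtn_eqF // !mul0r.
Qed.

Lemma topcoef_prod (I : Type) (r : seq I) (K : I -> nat) (F : I -> {poly R})
    (l : I -> R) :
  (forall i, topcoef (K i) (F i) (l i)) ->
  topcoef (\sum_(i <- r) K i) (\prod_(i <- r) F i) (\prod_(i <- r) l i).
Proof.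
move=> topF; elim: r => [|i r IHr]; first by rewrite !big_nil; exact: topcoefC.
by rewrite !big_cons; apply: topcoefM.
Qed.

Lemma topcoef_det N (K : 'I_N -> nat) (B : 'M[{poly R}]_N) (L : 'M[R]_N) :
  (forall i j, topcoef (K i) (B i j) (L i j)) ->
  topcoef (\sum_i K i) (\det B) (\det L).
Proof.
move=> topB; apply: (big_ind2 (topcoef _)) => [|p q c d|s _].
- exact: topcoef0.
- exact: topcoefD.
rewrite -[X in topcoef X]add0n -(rmorph_sign (@polyC R)).
by apply: topcoefM; [exact: topcoefC | apply: topcoef_prod].
Qed.

Lemma topcoef_mulXnK K e p c : topcoef (K + e) (p * 'X^e) c -> topcoef K p c.
Proof.
move=> top k le_Kk; have := top (k + e)%N; rewrite coefMXn ltnNge leq_addl addnK.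
by rewrite eqn_add2r; apply; rewrite leq_add2r.
Qed.

Lemma size_topcoef K p c : topcoef K p c -> c != 0 -> size p = K.+1.
Proof.
move=> top c_neq0; apply/eqP; rewrite eqn_leq; apply/andP; split.
  by apply/leq_sizeP => k lt_Kk; rewrite top ?(ltnW lt_Kk) // gtn_eqF // mul0r.
rewrite ltnNge; apply: contra c_neq0 => /leq_sizeP/(_ K (leqnn K)).
by rewrite top // eqxx mul1r => ->.
Qed.

Lemma topcoef_nderivn K m p c :
  (m <= K)%N -> topcoef K p c -> topcoef (K - m) p^`N(m) (c *+ 'C(K, m)).
Proof.
move=> le_mK top k le_k; rewrite coef_nderivn top; last by lia.
have -> : (m + k == K)%N = (k == K - m)%N by apply/eqP/eqP; lia.
by case: eqP => [->|_]; rewrite ?subnKC ?mulrnAr // !mul0r !mul0rn.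
Qed.

End TopCoefficient.

Lemma topcoef_fpoly n : topcoef n (fpoly n) 1.
Proof.
move=> k le_nk; rewrite mulr1 /fpoly coefD coefXn coef_sum big1 ?addr0 // => i _.
by rewrite coefCM coefXn gtn_eqF ?mulr0 //; apply: leq_trans le_nk.
Qed.

Definition binz (n : nat) (m : int) : rat :=
  if m is Posz k.+1 then 'C(n, k.+1)%:R else 0.

Lemma topcoef_phiXn n (m : int) (K e : nat) : (K%:Z + m = n%:Z + e%:Z)%R ->
  topcoef K (phi n m * 'X^e) (binz n m)%:MP.
Proof.
rewrite /phi /binz; case: m => [[|k]|k] degE; rewrite ?mul0r ?mpolyC0;
  try exact: topcoef0.
case: ifP => [/andP[_ le_kn] | /negbT]; last first.
  rewrite mul0r negb_and /= -ltnNge => lt_nk.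
  by rewrite bin_small ?mpolyC0 //; exact: topcoef0.
have -> : K = (n - k.+1 + e)%N by lia.
rewrite mpolyC_nat -[X in topcoef _ _ X]mulr1.
apply: topcoefM; last exact: topcoefXn.
exact: topcoef_nderivn le_kn (topcoef_fpoly n).
Qed.

Lemma Mentry_succ n (i j : nat) : Mentry n i.+1 j.+1 = phi n (2 * j%:Z - i%:Z + 2).
Proof. by rewrite /Mentry; case: ifP => odd_i; congr (phi n _); lia. Qed.

Definition binz_mx n N : 'M[rat]_N :=
  \matrix_(i, j) binz n (2 * (j : nat)%:Z - (i : nat)%:Z + 2).

Definition binom_odd (R : nzRingType) n : {poly R} :=
  \poly_(r < ((n - 1) %/ 2).+1) ('C(n, (2 * r).+1))%:R.

Definition binom_even (R : nzRingType) n : {poly R} :=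
  \poly_(r < ((n - 2) %/ 2).+1) ('C(n, (2 * r).+2))%:R.

Lemma coef_binom_odd (R : nzRingType) n r :
  (binom_odd R n)`_r = ('C(n, (2 * r).+1))%:R.
Proof. by rewrite coef_poly; case: ltnP => // ?; rewrite bin_small //; lia. Qed.

Lemma coef_binom_even (R : nzRingType) n r :
  (binom_even R n)`_r = ('C(n, (2 * r).+2))%:R.
Proof. by rewrite coef_poly; case: ltnP => // ?; rewrite bin_small //; lia. Qed.

Lemma size_binom_odd (R : numDomainType) n :
  (0 < n)%N -> size (binom_odd R n) = ((n - 1) %/ 2).+1.
Proof. by move=> ?; rewrite size_poly_eq // pnatr_eq0 -lt0n bin_gt0; lia. Qed.

Lemma size_binom_even (R : numDomainType) n :
  (1 < n)%N -> size (binom_even R n) = ((n - 2) %/ 2).+1.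
Proof. by move=> ?; rewrite size_poly_eq // pnatr_eq0 -lt0n bin_gt0; lia. Qed.

Lemma map_binom_odd {R S : nzRingType} (f : {rmorphism R -> S}) n :
  map_poly f (binom_odd R n) = binom_odd S n.
Proof. by apply/polyP => r; rewrite coef_map !coef_binom_odd; exact: rmorph_nat. Qed.

Lemma map_binom_even {R S : nzRingType} (f : {rmorphism R -> S}) n :
  map_poly f (binom_even R n) = binom_even S n.
Proof. by apply/polyP => r; rewrite coef_map !coef_binom_even; exact: rmorph_nat. Qed.

Lemma coef_Xadd1_exp (R : comNzRingType) n k :
  (('X + 1) ^+ n : {poly R})`_k = ('C(n, k))%:R.
Proof.
rewrite exprD1n (eq_bigr (fun i : 'I_n.+1 => 'C(n, i)%:R *: 'X^i)) => [|i _].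
  rewrite -(poly_def _ (fun i => 'C(n, i)%:R)) coef_poly.
  by case: ltnP => // ?; rewrite bin_small.
by rewrite scaler_nat.
Qed.

Lemma binom_parts_eq (R : comNzRingType) n :
  (binom_even R n \Po 'X^2) * 'X^2 + (binom_odd R n \Po 'X^2) * 'X = ('X + 1) ^+ n - 1.
Proof.
set g := RHS.
have oddE : odd_poly g = binom_odd R n.
  apply/polyP => r; rewrite coef_odd_poly coefB coef_Xadd1_exp coef1.
  by rewrite coef_binom_odd -mul2n subr0.
have evenE : even_poly g = binom_even R n * 'X.
  apply/polyP => -[|r]; rewrite coef_even_poly coefB coef_Xadd1_exp coef1 coefMX /=.
    by rewrite bin0 subrr.
  by rewrite coef_binom_even -mul2n subr0 mulnS.
by rewrite -[RHS](poly_even_odd g) evenE oddE comp_polyM comp_polyX.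
Qed.

Lemma binom_parts_no_common_root (C : numClosedFieldType) n (z : C) : (0 < n)%N ->
  root (binom_even C n) z -> root (binom_odd C n) z -> False.
Proof.
move=> n_gt0 /rootP rootE /rootP rootO.
have exp_eq1 (t : C) : t ^+ 2 = z -> (t + 1) ^+ n = 1.
  move=> tz; have /eqP := congr1 (horner^~ t) (binom_parts_eq C n).
  rewrite hornerD !hornerM !horner_comp hornerXn hornerX tz rootE rootO !mul0r addr0.
  by rewrite !hornerE eq_sym subr_eq0 => /eqP.
have norm1 (u : C) : u ^+ n = 1 -> u * u^* = 1.
  move=> /(congr1 (fun x => `|x|)); rewrite normrX normr1 => /eqP.
  by rewrite pexpr_eq1 // => /eqP u1; rewrite -normCK u1 expr1n.
pose t := sqrtC z; have tz : t ^+ 2 = z := sqrtCK z.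
have ntz : (- t) ^+ 2 = z by rewrite sqrrN.
have := norm1 _ (exp_eq1 _ tz); have := norm1 _ (exp_eq1 _ ntz).
rewrite !rmorphD rmorphN rmorph1 => e2 e1.
have ring_id : (t + 1) * (t^* + 1) + (- t + 1) * (- t^* + 1) = t * t^* *+ 2 + 2.
  by ring.
have : t * t^* *+ 2 = 0 by apply: (addIr 2); rewrite add0r -ring_id e1 e2.
move/eqP; rewrite mulrn_eq0 /= mul_conjC_eq0 => /eqP t0.
move/eqP: rootO; rewrite -tz t0 expr0n /= horner_coef0 coef_binom_odd bin1.
by rewrite pnatr_eq0 gtn_eqF.
Qed.

Lemma resultant_binom_parts_neq0 n :
  (0 < n)%N -> resultant (binom_even rat n) (binom_odd rat n) != 0.
Proof.
move=> n_gt0; rewrite resultant_eq0; apply/negP => gcd_gt1.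
set g := gcdp _ _ in gcd_gt1.
have /closed_rootP[z gz] : size (map_poly (ratr : rat -> algC) g) != 1%N.
  by rewrite size_map_poly; apply: contraTneq gcd_gt1 => ->.
have root_of_dvd p : g %| p -> root (map_poly (ratr : rat -> algC) p) z.
  by case/dvdpP => q ->; rewrite rmorphM rootM gz orbT.
apply: (@binom_parts_no_common_root _ n z n_gt0).
  by rewrite -(map_binom_even ratr); apply/root_of_dvd/dvdp_gcdl.
by rewrite -(map_binom_odd ratr); apply/root_of_dvd/dvdp_gcdr.
Qed.

Lemma det_eq0_reindex {R : idomainType} {m k} {A : 'M[R]_m} {B : 'M[R]_k}
    {f g : 'I_m -> 'I_k} : m = k -> injective f -> injective g ->
  (forall i j, A i j = B (f i) (g j)) -> (\det A == 0) = (\det B == 0).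
Proof.
move=> eq_mk; subst k => f_inj g_inj eqAB.
have -> : A = row_perm (perm.perm f_inj) (col_perm (perm.perm g_inj) B).
  by apply/matrixP => i j; rewrite !mxE !perm.permE eqAB.
by rewrite row_permE col_permE !det_mulmx !det_perm !mulf_eq0 !signr_eq0 /= orbF.
Qed.

Lemma binz_le0 n (m : int) : m <= 0 -> binz n m = 0.
Proof. by case: m => [[|m]|]. Qed.

Lemma binz_even_row n (k j : nat) :
  binz n (2 * j%:Z - (2 * k)%:Z + 2) = (binom_even rat n)`_(j - k) *+ (k <= j)%N.
Proof.
rewrite coef_binom_even; case: leqP => [le_kj|lt_jk]; last by rewrite binz_le0 //; lia.
by have -> : 2 * j%:Z - (2 * k)%:Z + 2 = ((2 * (j - k)).+2 : nat)%:Z by lia.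
Qed.

Lemma binz_odd_row n (k j : nat) :
  binz n (2 * j%:Z - (2 * k).+1%:Z + 2) = (binom_odd rat n)`_(j - k) *+ (k <= j)%N.
Proof.
rewrite coef_binom_odd; case: leqP => [le_kj|lt_jk]; last by rewrite binz_le0 //; lia.
by have -> : 2 * j%:Z - (2 * k).+1%:Z + 2 = ((2 * (j - k)).+1 : nat)%:Z by lia.
Qed.

Lemma det_binz_mx_neq0 n : (2 <= n)%N -> \det (binz_mx n (n - 2)) != 0.
Proof.
move=> n_ge2; set E := binom_even rat n; set O := binom_odd rat n.
have dimE : ((size O).-1 + (size E).-1 = n - 2)%N.
  by rewrite size_binom_odd ?size_binom_even //=; lia.
(* Rows 2k and 2k+1 of binz_mx are the k-th shifts of E and of O, i.e. the
   two blocks of rows of the Sylvester matrix, interleaved. *)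
pose sylv_row (i : nat) := if odd i then ((n - 1) %/ 2 + i./2)%N else i./2.
have sylv_row_lt (i : 'I_(n - 2)) : (sylv_row i < n - 2)%N.
  by have := ltn_ord i; rewrite /sylv_row; case: ifP; lia.
pose f i := cast_ord (esym dimE) (Ordinal (sylv_row_lt i)).
have f_inj : injective f.
  move=> i1 i2 /(congr1 val) /=; rewrite /sylv_row => eq_row; apply: ord_inj.
  by have := ltn_ord i1; have := ltn_ord i2; move: eq_row; do 2 case: ifP; lia.
have g_inj := @cast_ord_inj _ _ (esym dimE).
rewrite (det_eq0_reindex (B := Sylvester_mx E O) (esym dimE) f_inj g_inj) => [|i j].
  by apply: resultant_binom_parts_neq0; lia.
have sizeO : ((size O).-1 = (n - 1) %/ 2)%N by rewrite size_binom_odd //; lia.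
rewrite mxE Sylvester_mxE; case: splitP => -[k lt_k] /= row_k.
- rewrite -binz_even_row; congr (binz n _).
  by move: row_k lt_k; rewrite sizeO /sylv_row; case: ifP; lia.
- rewrite -binz_odd_row; congr (binz n _).
  by move: row_k (ltn_ord i); rewrite sizeO /sylv_row; case: ifP; lia.
Qed.

Lemma sum_ord_triangle N : ((\sum_(i < N) i) * 2 = N * N.-1)%N.
Proof.
elim: N => [|N IHN]; first by rewrite big_ord0.
by rewrite big_ord_recr /= mulnDl IHN; case: N {IHN} => // N; nia.
Qed.

Lemma sum_ord_shift_split N :
  (\sum_(i < N) (N + i) = (N.+1 * N) %/ 2 + \sum_(i < N) 2 * i)%N.
Proof.
rewrite big_split sum_nat_const card_ord -big_distrr /=.
move: (sum_ord_triangle N); move: (\sum_(i < N) i)%N => S hS; nia.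
Qed.

Theorem theorem5 (n : nat) (hn : (3 <= n)%N) :
  Hminor n != 0 /\ ((size (Hminor n)).-1 = ((n - 1) * (n - 2)) %/ 2)%N.
Proof.
set N := (n - 2)%N; set A := \matrix_(i < N, j < N) Mentry n i.+1 j.+1.
pose D := diag_mx (\row_(j < N) ('X^(2 * j) : {poly {mpoly rat[n]}})).
have topAD : topcoef (\sum_(i < N) (N + i)) (\det (A *m D))
                     (\det (map_mx (@mpolyC n rat) (binz_mx n N))).
  apply: topcoef_det => i j; rewrite mul_mx_diag !mxE Mentry_succ.
  by apply: topcoef_phiXn; lia.
have detD : \det D = 'X^(\sum_(j < N) 2 * j).
  by rewrite det_diag -prodrXr; apply: eq_bigr => j _; rewrite mxE.
rewrite det_mulmx detD det_map_mx sum_ord_shift_split in topAD.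
have detL_neq0 : (\det (binz_mx n N))%:MP_[n] != 0.
  by rewrite mpolyC_eq0 det_binz_mx_neq0 //; lia.
move/topcoef_mulXnK/size_topcoef: topAD => /(_ detL_neq0) sizeA.
rewrite /Hminor -/A sizeA; split; first by rewrite -size_poly_eq0 sizeA.
by rewrite /N; congr (_ %/ 2)%N; lia.
Qed.
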